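(* For every $p\in(0,1)$ and $q\in[p,1]$, \[\mathrm{aa}_p^q(2)\ge\Big(\frac{2\cdot2^{p/q}}{2^p\big(2-(2-2^p)^{q/p}\big)^{p/q}+2(2-2^p)}\Big)^{1/p}.\] In particular, $\mathrm{aa}_p(2)\ge\frac{4}{4+2^p(2^p-2)}$, and if $p\in(0,1)$ satisfies \[\frac{2^{p+1}}{4+2^p\big((2-(2-2^p)^{1/p})^p-2\big)}>1,\] then $\mathrm{aa}_p^1(2)>1$ (which is the case, e.g., for $p=2/3$).
   Context: For $r\in(0,1]$, an $r$-metric space is a set with $d$ such that $d^r$ is a metric; pointed means a distinguished point $0$. A $p$-Banach space is a complete vector space with a $p$-norm. For a pointed $p$-metric space $\mathcal M$, $\delta(x)$ is evaluation at $x$ on real functions vanishing at $0$, and $\mathcal F_p(\mathcal M)$ is the completion of $\mathrm{span}\{\delta(x)\}$ under $\|\sum a_i\delta(x_i)\|=\sup\|\sum a_if(x_i)\|_Y$ over $p$-Banach $Y$ and $1$-Lipschitz $f:\mathcal M\to Y$ with $f(0)=0$. For $0\in\mathcal N\subset\mathcal M$, $L_j$ is the linear map $\delta_{\mathcal N}(x)\mapsto\delta_{\mathcal M}(x)$ and $\mathrm{amen}_p(\mathcal N,\mathcal M)=\|L_j^{-1}\|$ if $L_j$ is an isomorphism onto its range ($+\infty$ otherwise). $\mathrm{aa}_p^q(n)=\sup\{\mathrm{amen}_p(\mathcal N,\mathcal M'):\mathcal N$ a pointed $q$-metric space with $|\mathcal N\setminus\{0\}|\le n$, $\mathcal M'\supset\mathcal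 N$ any $q$-metric space$\}$, and $\mathrm{aa}_p(n)=\mathrm{aa}_p^p(n)$. *)

From HB Require Import structures.
From mathcomp Require Import all_boot all_order all_algebra.
From mathcomp Require Import all_classical all_reals all_analysis.
From Stdlib Require List.
Set Implicit Arguments. Unset Strict Implicit. Unset Printing Implicit Defensive.
Import Order.TTheory GRing.Theory Num.Theory.
Local Open Scope classical_set_scope.
Local Open Scope ring_scope.

Definition rmetric (R : realType) (r : R) (T : Type) (d : T -> T -> R) : Prop :=
  [/\ forall x y, 0 <= d x y,
      forall x y, d x y = 0 <-> x = y,
      forall x y, d x y = d y x &
      forall x y z, d x z `^ r <= d x y `^ r + d y z `^ r].

Record pBanach (R : realType) (p : R) := PBanach {
  pb_car :> lmodType R;
  pb_norm : pb_car -> R;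
  pb_ge0 : forall x, 0 <= pb_norm x;
  pb_eq0 : forall x, pb_norm x = 0 -> x = 0;
  pb_hom : forall (a : R) x, pb_norm (a *: x) = `|a| * pb_norm x;
  pb_tri : forall x y, pb_norm (x + y) `^ p <= pb_norm x `^ p + pb_norm y `^ p;
  pb_complete : forall u : nat -> pb_car,
    (forall e, 0 < e -> exists N, forall m n, (N <= m)%N -> (N <= n)%N ->
        pb_norm (u m - u n) < e) ->
    exists y, forall e, 0 < e -> exists N, forall n, (N <= n)%N ->
        pb_norm (u n - y) < e
}.

(* Norm in F_p(S) (S a subset of T containing the base point x0, with the
   restricted metric d) of the finitely supported molecule
   mu = sum_i a_i delta(x_i), encoded as the list of pairs (a_i, x_i):
   sup over p-Banach Y and 1-Lipschitz f : S -> Y with f x0 = 0 of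
   || sum_i a_i f(x_i) ||_Y.  (f is given as a function on T; only its
   values on S matter.) *)
Definition freenorm (R : realType) (p : R) (T : Type) (d : T -> T -> R)
    (x0 : T) (S : set T) (mu : seq (R * T)) : R :=
  sup [set r | exists (Y : @pBanach R p) (f : T -> Y),
        [/\ f x0 = 0,
            forall x y, S x -> S y -> pb_norm (f x - f y) <= d x y &
            r = pb_norm (\sum_(z <- mu) z.1 *: f z.2)]].

(* amen_p(S, T) = || L_j^{-1} ||, i.e. the least C >= 0 with
   ||mu||_{F_p(S)} <= C ||mu||_{F_p(T)} for all molecules supported in S
   (+oo if there is no such C, i.e. L_j is not an isomorphism onto its range). *)
Definition amen (R : realType) (p : R) (T : Type) (d : T -> T -> R)
    (x0 : T) (S : set T) : \bar R :=
  ereal_inf [set C%:E | C in [set C : R | 0 <= C /\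
     forall mu : seq (R * T), (forall z, Stdlib.Lists.List.In z mu -> S z.2) ->
       freenorm p d x0 S mu <= C * freenorm p d x0 setT mu]].

(* aa_p^q(n): sup of amen_p(N, M') over pointed q-metric spaces N with at
   most n points besides the base point, and q-metric spaces M' containing N. *)
Definition aa (R : realType) (p q : R) (n : nat) : \bar R :=
  ereal_sup [set a | exists (T : Type) (d : T -> T -> R) (x0 : T) (S : set T),
     [/\ rmetric q d, S x0,
         (exists f : 'I_n -> T, S `<=` x0 |` range f) &
         a = amen p d x0 S]].

From HB Require Import structures.
From mathcomp Require Import all_boot all_order all_algebra.
From mathcomp Require Import all_classical all_reals all_analysis.
From mathcomp Require Import ring lra.

Set Implicit Arguments.
Unset Strict Implicit.
Unset Printing Implicit Defensive.
Import Order.TTheory GRing.Theory Num.Theory.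
Local Open Scope classical_set_scope.
Local Open Scope ring_scope.

(* Let k = 2 - 2^p and U = k^(q/p), and give M = {0, x, y, z} the q-metric with
   d(0,x) = d(0,y) = 1, d(x,y)^q = U, d(x,z)^q = d(y,z)^q = U/2 and
   d(0,z)^q = 1 - U/2; let N = {0, x, y}.  In F_p(M), writing
   δx + δy = 2δz + (δx - δz) + (δy - δz) gives
   ||δx + δy||^p <= 2^p d(0,z)^p + 2 d(x,z)^p.
   In F_p(N) the same molecule has norm at least 2^(1/p): send x and y to the
   unit vectors of R^2 with the p-norm ||v||^p = inf_c |v1 - c|^p + |v2 + c|^p + k|c|^p
   (a quotient of a weighted l_p^3 by a line).  This map is 1-Lipschitz on N since
   ||e1 - e2||^p <= k = d(x,y)^p, and ||e1 + e2||^p >= 2 by concavity of t^p.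
   The ratio of the two bounds is the stated constant. *)

Section PowR.
Context {R : realType}.
Implicit Types a b c p r x y : R.

Lemma ler_powRl r x y : 0 <= r -> 0 <= x -> x <= y -> x `^ r <= y `^ r.
Proof. by move=> r0 x0 xy; apply: ge0_ler_powR; rewrite ?nnegrE // (le_trans x0). Qed.

Lemma ltr_powRl r x y : 0 < r -> 0 <= x -> x < y -> x `^ r < y `^ r.
Proof.
by move=> r0 x0 xy; apply: gt0_ltr_powR; rewrite ?nnegrE // (le_trans x0 (ltW xy)).
Qed.

Lemma powRrK r x : 0 < r -> 0 <= x -> (x `^ r) `^ r^-1 = x.
Proof. by move=> r0 x0; rewrite -powRrM mulfV ?gt_eqF // powRr1. Qed.

Lemma powRrVK r x : 0 < r -> 0 <= x -> (x `^ r^-1) `^ r = x.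
Proof. by move=> r0 x0; rewrite -powRrM mulVf ?gt_eqF // powRr1. Qed.

Lemma powR_div a b r : 0 <= a -> 0 <= b -> (a / b) `^ r = a `^ r / b `^ r.
Proof.
by move=> a0 b0; rewrite powRM ?invr_ge0 // -powR_inv1 // -powRrM mulN1r powRN.
Qed.

Lemma ge0_ger1_powR x r : 0 <= x <= 1 -> r <= 1 -> x <= x `^ r.
Proof.
case/andP; rewrite le_eqVlt => /predU1P[<- _ _|x0 x1 r1]; first exact: powR_ge0.
by apply: ger1_powR; rewrite ?x0.
Qed.

Lemma powRD_le p a b : 0 < p <= 1 -> 0 <= a -> 0 <= b ->
  (a + b) `^ p <= a `^ p + b `^ p.
Proof.
move=> /andP[p0 p1] a0 b0; have [s0|s_neq0] := eqVneq (a + b) 0.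
  by rewrite s0 powR0 ?gt_eqF // addr_ge0 ?powR_ge0.
have s_gt0 : 0 < a + b by rewrite lt_neqAle eq_sym s_neq0 addr_ge0.
have scale (t : R) : 0 <= t -> t `^ p = (a + b) `^ p * (t / (a + b)) `^ p.
  by move=> t0; rewrite -powRM ?divr_ge0 ?(ltW s_gt0) // mulrCA divff // mulr1.
have frac_le (t : R) : 0 <= t <= a + b -> t / (a + b) <= (t / (a + b)) `^ p.
  case/andP=> t0 ts; apply: ge0_ger1_powR => //.
  by rewrite divr_ge0 ?(ltW s_gt0) //= ler_pdivrMr // mul1r.
rewrite (scale a) // (scale b) // -mulrDr -{1}[_ `^ p]mulr1 ler_wpM2l ?powR_ge0 //.
have -> : 1 = a / (a + b) + b / (a + b) by rewrite -mulrDl divff.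
by apply: lerD; apply: frac_le; apply/andP; split => //; lra.
Qed.

Lemma normD_powR_le p a b : 0 < p <= 1 -> `|a + b| `^ p <= `|a| `^ p + `|b| `^ p.
Proof.
move=> hp; apply: le_trans _ (powRD_le hp (normr_ge0 a) (normr_ge0 b)).
case/andP: hp => p0 _.
by apply: ler_powRl; [exact: ltW | exact: normr_ge0 | exact: ler_normD].
Qed.

Lemma powR_chord p c : 0 < p <= 1 -> 0 <= c <= 1 ->
  (1 - c) + c * 2 `^ p <= (1 + c) `^ p.
Proof.
move=> /andP[p0 p1] /andP[c0 c1].
have c'0 : 0 <= 1 - c by lra.
have c'1 : 1 - c <= 1 by lra.
have := @convex_powR R p^-1 _ (Itv01 c'0 c'1) 1 (2 `^ p).
rewrite invf_ge1 // !inE /= !in_itv /= !andbT powR_ge0 ler01 => /(_ p1 isT isT).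
rewrite [X in X `^ _ <= _]convRE !convRE /= powR1 powRrK ?ler0n //.
rewrite /unstable.onem subKr !mulr1 => chord.
have X0 : 0 <= 1 - c + c * 2 `^ p by rewrite addr_ge0 ?mulr_ge0 ?powR_ge0; lra.
rewrite -[X in X <= _](powRrVK p0 X0).
by apply: ler_powRl; rewrite ?powR_ge0 ?(ltW p0) //; lra.
Qed.

Lemma ge1_ler_powRV x p : 1 <= x -> 0 < p <= 1 -> x <= x `^ (1 / p).
Proof. by move=> x1 /andP[p0 p1]; rewrite le1r_powR // div1r invf_ge1. Qed.

Lemma two_powR_ge1 p : 0 <= p -> 1 <= 2 `^ p.
Proof. by move=> p0; have := @ler_powR _ 2 (ler1n _ _) 0 p p0; rewrite powRr0. Qed.

Lemma two_powR_lt2 p : p < 1 -> 2 `^ p < 2.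
Proof.
move=> p1; rewrite -[X in _ < X](@powRr1 _ 2) // /powR gt_eqF //.
by rewrite ltr_expR ltr_pM2r // ln_gt0 // ltr1n.
Qed.

Lemma two_le_sum_powR p c : 0 < p <= 1 ->
  2 <= `|1 - c| `^ p + `|1 + c| `^ p + (2 - 2 `^ p) * `|c| `^ p.
Proof.
move=> hp; have /andP[p0 p1] := hp.
have k0 : 0 <= 2 - 2 `^ p by rewrite subr_ge0 ler1_powR ?ler1n.
wlog c0 : c / 0 <= c.
  move=> hwlog; have [/hwlog //|c_lt0] := lerP 0 c.
  by have := hwlog (- c); rewrite oppr_ge0 ltW // normrN opprK => /(_ isT); lra.
have c'0 : 0 <= 1 + c by lra.
rewrite (ger0_norm c0) (ger0_norm c'0).
(* [lerP] also rewrites [`|1 - c|] to [1 - c], resp. [c - 1]. *)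
have [c1|c1] := lerP c 1.
- have e1 : 1 - c <= (1 - c) `^ p by apply: ge0_ger1_powR => //; apply/andP; split; lra.
  have e2 : c <= c `^ p by apply: ge0_ger1_powR => //; apply/andP.
  have e3 : (1 - c) + c * 2 `^ p <= (1 + c) `^ p by apply: powR_chord => //; apply/andP.
  have e4 : (2 - 2 `^ p) * c <= (2 - 2 `^ p) * c `^ p by exact: ler_wpM2l.
  lra.
have e1 : 2 `^ p <= (1 + c) `^ p by apply: ler_powRl; rewrite ?(ltW p0) //; lra.
have e2 : 1 <= c `^ p by have := @ler_powR _ c (ltW c1) 0 p (ltW p0); rewrite powRr0.
have e3 : (2 - 2 `^ p) * 1 <= (2 - 2 `^ p) * c `^ p by exact: ler_wpM2l.
have := powR_ge0 (c - 1) p; lra.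
Qed.
End PowR.

Section RealCauchy.
Import numFieldNormedType.Exports.

Lemma cauchy_seqR_cvg (R : realType) (u : nat -> R) :
  (forall e, 0 < e -> exists N, forall m n, (N <= m)%N -> (N <= n)%N ->
     `|u m - u n| < e) ->
  exists l, forall e, 0 < e -> exists N, forall n, (N <= n)%N -> `|u n - l| < e.
Proof.
move=> u_cauchy; have /cvgrPdist_lt u_cvg : cvg (u @ \oo).
  apply: cauchy_cvg; apply: cauchy_exP => e /u_cauchy[N uN].
  by exists (u N), N => // n Nn; rewrite /= -ball_normE; exact: uN.
exists (lim (u @ \oo)) => e /u_cvg[N _ uN].
by exists N => n Nn; rewrite distrC; exact: uN.
Qed.

End RealCauchy.

Section QuotientNorm.
Context {R : realType}.
Variables (p k : R).
Hypotheses (hp : 0 < p <= 1) (k_gt0 : 0 < k).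
Let p_gt0 : 0 < p. Proof. by case/andP: hp. Qed.
Local Notation V := (R^o * R^o)%type.
Implicit Types (v w : V) (a c : R).

Definition qcost v c := `|v.1 - c| `^ p + `|v.2 + c| `^ p + k * `|c| `^ p.

(* Locked, so that unification never unfolds the infimum or the real power. *)
Fact qnormp_key : unit. Proof. by []. Qed.
Definition qnormp := locked_with qnormp_key (fun v => inf (range (qcost v))).
Canonical qnormp_unlockable := [unlockable fun qnormp].

Fact qnorm_key : unit. Proof. by []. Qed.
Definition qnorm := locked_with qnorm_key (fun v => qnormp v `^ p^-1).
Canonical qnorm_unlockable := [unlockable fun qnorm].

Lemma qnormE v : qnorm v = qnormp v `^ p^-1.
Proof. by rewrite unlock. Qed.

Lemma qcost_ge0 v c : 0 <= qcost v c.
Proof. by rewrite /qcost !addr_ge0 ?mulr_ge0 ?powR_ge0 ?(ltW k_gt0). Qed.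

Lemma qnormp_le v c : qnormp v <= qcost v c.
Proof.
by rewrite unlock; apply: ge_inf; [exists 0 => _ [c' _ <-]; exact: qcost_ge0 | exists c].
Qed.

Lemma qnormp_ge v x : (forall c, x <= qcost v c) -> x <= qnormp v.
Proof.
move=> h; rewrite unlock.
by apply: lb_le_inf => [|_ [c _ <-]]; [exists (qcost v 0), 0 | exact: h].
Qed.

Lemma qnormp_ge0 v : 0 <= qnormp v.
Proof. exact/qnormp_ge/qcost_ge0. Qed.

Lemma qnormp_le_coord v : qnormp v <= `|v.1| `^ p + `|v.2| `^ p.
Proof.
apply: le_trans (qnormp_le v 0) _.
by rewrite /qcost subr0 addr0 normr0 powR0 ?gt_eqF // mulr0 addr0.
Qed.

Lemma qnormp_coord v : `|v.1| `^ p + `|v.2| `^ p <= (1 + 2 / k) * qnormp v.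
Proof.
have K_gt0 : 0 < 1 + 2 / k by rewrite addr_gt0 ?ltr01 ?divr_gt0.
rewrite -ler_pdivrMl //; apply: qnormp_ge => c; rewrite ler_pdivrMl //.
have h1 : `|v.1| `^ p <= `|v.1 - c| `^ p + `|c| `^ p.
  by have := normD_powR_le (v.1 - c) c hp; rewrite subrK.
have h2 : `|v.2| `^ p <= `|v.2 + c| `^ p + `|c| `^ p.
  by have := normD_powR_le (v.2 + c) (- c) hp; rewrite addrK normrN.
have hk : 2 * `|c| `^ p = 2 / k * (k * `|c| `^ p) by rewrite mulrA divfK ?gt_eqF.
have : 0 <= 2 / k * (`|v.1 - c| `^ p + `|v.2 + c| `^ p).
  by rewrite mulr_ge0 ?addr_ge0 ?powR_ge0 ?divr_ge0 ?ltW.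
have := mulr_ge0 (ltW k_gt0) (powR_ge0 `|c| p).
rewrite /qcost; lra.
Qed.

Lemma qcostD v w c c' : qcost (v + w) (c + c') <= qcost v c + qcost w c'.
Proof.
have e1 : v.1 + w.1 - (c + c') = (v.1 - c) + (w.1 - c') by ring.
have e2 : v.2 + w.2 + (c + c') = (v.2 + c) + (w.2 + c') by ring.
rewrite /qcost /= e1 e2.
have := normD_powR_le (v.1 - c) (w.1 - c') hp.
have := normD_powR_le (v.2 + c) (w.2 + c') hp.
have := ler_wpM2l (ltW k_gt0) (normD_powR_le c c' hp).
lra.
Qed.

Lemma qnormpD v w : qnormp (v + w) <= qnormp v + qnormp w.
Proof.
have h c' : qnormp (v + w) - qcost w c' <= qnormp v.
  by apply: qnormp_ge => c; have := qnormp_le (v + w) (c + c'); have := qcostD v w c c'; lra.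
have : qnormp (v + w) - qnormp v <= qnormp w by apply: qnormp_ge => c'; have := h c'; lra.
lra.
Qed.

Lemma qcostZ a v c : qcost (a *: v) (a * c) = `|a| `^ p * qcost v c.
Proof. by rewrite /qcost /= -mulrBr -mulrDr !normrM !powRM ?normr_ge0 //; ring. Qed.

Lemma qnormpZ a v : qnormp (a *: v) = `|a| `^ p * qnormp v.
Proof.
have [->|a0] := eqVneq a 0.
  rewrite scale0r normr0 powR0 ?gt_eqF // mul0r; apply/eqP; rewrite eq_le qnormp_ge0 andbT.
  apply: le_trans (qnormp_le 0 0) _.
  by rewrite /qcost /= subr0 addr0 normr0 powR0 ?gt_eqF // mulr0 !addr0.
have ap_gt0 : 0 < `|a| `^ p by rewrite powR_gt0 ?normr_gt0.
apply/eqP; rewrite eq_le; apply/andP; split.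
  rewrite -ler_pdivrMl //; apply: qnormp_ge => c; rewrite ler_pdivrMl // -qcostZ.
  exact: qnormp_le.
apply: qnormp_ge => c; rewrite -[c](mulVKf a0) qcostZ.
by rewrite ler_wpM2l ?(ltW ap_gt0) ?qnormp_le.
Qed.

Lemma qnorm_ge0 v : 0 <= qnorm v.
Proof. by rewrite qnormE powR_ge0. Qed.

Lemma qnorm_powR v : qnorm v `^ p = qnormp v.
Proof. by rewrite qnormE powRrVK ?qnormp_ge0. Qed.

Lemma qnorm_le_cost v c : qnorm v <= qcost v c `^ p^-1.
Proof.
by rewrite qnormE; apply: ler_powRl; rewrite ?invr_ge0 ?(ltW p_gt0) ?qnormp_ge0 ?qnormp_le.
Qed.

Lemma qnormZ a v : qnorm (a *: v) = `|a| * qnorm v.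
Proof. by rewrite !qnormE qnormpZ powRM ?powR_ge0 ?qnormp_ge0 // powRrK. Qed.

Lemma qnorm0 : qnorm 0 = 0.
Proof. by have := qnormZ 0 0; rewrite scale0r normr0 mul0r. Qed.

Lemma qnormN v : qnorm (- v) = qnorm v.
Proof. by rewrite -scaleN1r qnormZ normrN normr1 mul1r. Qed.

Lemma qnorm_unit1 : qnorm (1, 0) <= 1.
Proof.
apply: le_trans (qnorm_le_cost _ 0) _.
by rewrite /qcost /= subr0 addr0 normr0 normr1 powR0 ?gt_eqF // powR1 mulr0 !addr0 powR1.
Qed.

Lemma qnorm_unit2 : qnorm (0, 1) <= 1.
Proof.
apply: le_trans (qnorm_le_cost _ 0) _.
by rewrite /qcost /= subr0 addr0 normr0 normr1 powR0 ?gt_eqF // powR1 mulr0 add0r addr0 powR1.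
Qed.

Lemma qnorm_diff : qnorm (1, -1) <= k `^ p^-1.
Proof.
apply: le_trans (qnorm_le_cost _ 1) _.
by rewrite /qcost /= subrr addNr normr0 normr1 powR0 ?gt_eqF // powR1 mulr1 !add0r.
Qed.

Lemma qnormD v w : qnorm (v + w) `^ p <= qnorm v `^ p + qnorm w `^ p.
Proof. by have := qnormpD v w; rewrite -!qnorm_powR. Qed.

Lemma qnorm_eq0 v : qnorm v = 0 -> v = 0.
Proof.
case: v => x y; rewrite qnormE => /powR_eq0_eq0 v0.
have := qnormp_coord (x, y); rewrite v0 mulr0 /= => xy0.
have := powR_ge0 `|x| p; have := powR_ge0 `|y| p => y0 x0.
have /powR_eq0_eq0/normr0_eq0 -> : `|x| `^ p = 0 by lra.
by have /powR_eq0_eq0/normr0_eq0 -> : `|y| `^ p = 0 by lra.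
Qed.

Let M := (1 + 2 / k) `^ p^-1.

Lemma qnorm_coord v : `|v.1| <= M * qnorm v /\ `|v.2| <= M * qnorm v.
Proof.
have root x : `|x| `^ p <= (1 + 2 / k) * qnormp v -> `|x| <= M * qnorm v.
  move=> xv; rewrite qnormE -powRM ?qnormp_ge0 ?addr_ge0 ?ler01 ?divr_ge0 ?(ltW k_gt0) //.
  by rewrite -(powRrK p_gt0 (normr_ge0 x)) ler_powRl ?invr_ge0 ?(ltW p_gt0) ?powR_ge0.
have := qnormp_coord v; have := powR_ge0 `|v.1| p; have := powR_ge0 `|v.2| p.
by split; apply: root; lra.
Qed.

Lemma qnorm_complete (u : nat -> V) :
  (forall e, 0 < e -> exists N, forall m n, (N <= m)%N -> (N <= n)%N ->
     qnorm (u m - u n) < e) ->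
  exists y, forall e, 0 < e -> exists N, forall n, (N <= n)%N -> qnorm (u n - y) < e.
Proof.
move=> u_cauchy.
have M_gt0 : 0 < M by rewrite powR_gt0 // addr_gt0 ?ltr01 ?divr_gt0.
have coord_cvg (pr : V -> R) :
    (forall v w, pr (v - w) = pr v - pr w) -> (forall v, `|pr v| <= M * qnorm v) ->
    exists l, forall e, 0 < e -> exists N, forall n, (N <= n)%N -> `|pr (u n) - l| < e.
  move=> prB prM; apply: cauchy_seqR_cvg => e e0.
  have [N uN] := u_cauchy (e / M) (divr_gt0 e0 M_gt0).
  exists N => m n Nm Nn; rewrite -prB; apply: le_lt_trans (prM _) _.
  by rewrite -ltr_pdivlMl // mulrC; exact: uN.
have [l1 l1P] := coord_cvg fst (fun _ _ => erefl) (fun v => (qnorm_coord v).1).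
have [l2 l2P] := coord_cvg snd (fun _ _ => erefl) (fun v => (qnorm_coord v).2).
exists (l1, l2) => e e0.
have ep_gt0 : 0 < e `^ p / 2 by rewrite divr_gt0 ?powR_gt0.
have small (x : R) : `|x| < (e `^ p / 2) `^ p^-1 -> `|x| `^ p < e `^ p / 2.
  by move=> xe; rewrite -(powRrVK p_gt0 (ltW ep_gt0)) ltr_powRl.
have [N1 N1P] := l1P _ (powR_gt0 p^-1 ep_gt0).
have [N2 N2P] := l2P _ (powR_gt0 p^-1 ep_gt0).
exists (maxn N1 N2) => n; rewrite geq_max => /andP[n1 n2].
rewrite qnormE -(powRrK p_gt0 (ltW e0)) ltr_powRl ?invr_gt0 ?qnormp_ge0 //.
apply: le_lt_trans (qnormp_le_coord _) _.
by have := small _ (N1P n n1); have := small _ (N2P n n2); rewrite /=; lra.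
Qed.

Definition qnorm_pBanach : @pBanach R p :=
  @PBanach R p (V : lmodType R) qnorm qnorm_ge0 qnorm_eq0 qnormZ qnormD qnorm_complete.

End QuotientNorm.

Section PBanachSums.
Context {R : realType} {p : R} {Y : @pBanach R p}.
Hypothesis p_gt0 : 0 < p.

Lemma pb_norm0 : pb_norm (0 : Y) = 0.
Proof. by have := pb_hom 0 (0 : Y); rewrite scale0r normr0 mul0r. Qed.

Lemma pb_norm_le_root (x : Y) b : pb_norm x `^ p <= b -> pb_norm x <= b `^ p^-1.
Proof.
move=> xb; rewrite -(powRrK p_gt0 (pb_ge0 x)).
by rewrite ler_powRl ?invr_ge0 ?(ltW p_gt0) ?powR_ge0.
Qed.

Lemma pb_norm_sum_powR {I : Type} (s : seq I) (a : I -> R) (x : I -> Y) :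
  pb_norm (\sum_(i <- s) a i *: x i) `^ p <= \sum_(i <- s) `|a i| `^ p * pb_norm (x i) `^ p.
Proof.
elim: s => [|i s IH]; first by rewrite !big_nil pb_norm0 powR0 ?gt_eqF.
rewrite !big_cons; apply: le_trans (pb_tri _ _) _.
by rewrite pb_hom powRM ?normr_ge0 ?pb_ge0 // lerD.
Qed.

End PBanachSums.

Section FreeNorm.
Context {R : realType} {T : Type}.
Variables (p : R) (d : T -> T -> R) (x0 : T) (S : set T).
Hypothesis p_gt0 : 0 < p.

Lemma freenorm_ge (mu : seq (R * T)) (Y : @pBanach R p) (f : T -> Y) :
  S x0 -> (forall z, List.In z mu -> S z.2) ->
  f x0 = 0 -> (forall x y, S x -> S y -> pb_norm (f x - f y) <= d x y) ->
  pb_norm (\sum_(z <- mu) z.1 *: f z.2) <= freenorm p d x0 S mu.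
Proof.
move=> Sx0 muS f0 f_lip; apply: sup_upper_bound; last by exists Y, f.
split; first by exists (pb_norm (\sum_(z <- mu) z.1 *: f z.2)), Y, f.
exists ((\sum_(z <- mu) `|z.1| `^ p * d z.2 x0 `^ p) `^ p^-1).
move=> _ [Y' [g [g0 g_lip ->]]]; apply: pb_norm_le_root => //.
apply: le_trans (pb_norm_sum_powR p_gt0 mu (fun z => z.1) (fun z => g z.2)) _.
elim: mu muS => [|z mu IH] muS; rewrite ?big_nil ?big_cons //.
apply: lerD; last by apply: IH => z' z'mu; apply: muS; right.
rewrite ler_wpM2l ?powR_ge0 // ler_powRl ?(ltW p_gt0) ?pb_ge0 //.
by have := g_lip z.2 x0 (muS z (or_introl erefl)) Sx0; rewrite g0 subr0.
Qed.

Lemma freenorm_le (mu : seq (R * T)) b : 0 <= b ->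
  (forall (Y : @pBanach R p) (f : T -> Y), f x0 = 0 ->
     (forall x y, S x -> S y -> pb_norm (f x - f y) <= d x y) ->
     pb_norm (\sum_(z <- mu) z.1 *: f z.2) <= b) ->
  freenorm p d x0 S mu <= b.
Proof.
move=> b0 hb; rewrite /freenorm; set A := [set r | _].
have [A0|A0] := pselect (A !=set0).
  by apply: ge_sup => // _ [Y [f [f0 f_lip ->]]]; exact: hb.
suff -> : A = set0 by rewrite sup0.
by apply/seteqP; split => // r Ar; apply: A0; exists r.
Qed.

Lemma amen_ge (mu : seq (R * T)) a b : 0 < b -> (forall z, List.In z mu -> S z.2) ->
  a <= freenorm p d x0 S mu -> freenorm p d x0 setT mu <= b ->
  ((a / b)%:E <= amen p d x0 S)%E.
Proof.
move=> b_gt0 muS aS Tb; apply: le_ereal_inf_tmp => _ [C [C0 /(_ mu muS) SC] <-].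
by rewrite lee_fin ler_pdivrMr //; have := ler_wpM2l C0 Tb; lra.
Qed.

End FreeNorm.

Inductive point := pt0 | ptx | pty | ptz.

Section FourPointSpace.
Context {R : realType}.
Variables (p q : R).
Hypotheses (p_gt0 : 0 < p) (p_lt1 : p < 1) (q_gt0 : 0 < q).
Let hp : 0 < p <= 1. Proof. by rewrite p_gt0 ltW. Qed.

Definition gap := 2 - 2 `^ p.

Lemma gap_gt0 : 0 < gap.
Proof. by rewrite subr_gt0 two_powR_lt2. Qed.

Lemma gap_le1 : gap <= 1.
Proof. by have := two_powR_ge1 (ltW p_gt0); rewrite /gap; lra. Qed.

Definition gapq := gap `^ (q / p).

Lemma gapq_gt0 : 0 < gapq.
Proof. exact/powR_gt0/gap_gt0. Qed.

Lemma gapq_le1 : gapq <= 1.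
Proof.
have := @ger_powR _ gap; rewrite gap_gt0 gap_le1 => /(_ isT 0 (q / p)).
by rewrite powRr0; apply; rewrite divr_ge0 ?ltW.
Qed.

Definition dist4q (x y : point) : R :=
  match x, y with
  | pt0, pt0 | ptx, ptx | pty, pty | ptz, ptz => 0
  | pt0, ptx | ptx, pt0 | pt0, pty | pty, pt0 => 1
  | ptx, pty | pty, ptx => gapq
  | pt0, ptz | ptz, pt0 => 1 - gapq / 2
  | ptx, ptz | ptz, ptx | pty, ptz | ptz, pty => gapq / 2
  end.

Definition dist4 x y := dist4q x y `^ q^-1.

Lemma dist4q_ge0 x y : 0 <= dist4q x y.
Proof. by have := gapq_gt0; have := gapq_le1; case: x; case: y => /= ? ?; lra. Qed.

Lemma dist4_ge0 x y : 0 <= dist4 x y.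
Proof. exact: powR_ge0. Qed.

Lemma dist4_powR x y : dist4 x y `^ q = dist4q x y.
Proof. by rewrite powRrVK ?dist4q_ge0. Qed.

Lemma dist4_rmetric : rmetric q dist4.
Proof.
have := gapq_gt0; have := gapq_le1 => gapq1 gapq0.
split=> [x y | x y | x y | x y z]; first exact: dist4_ge0.
- split=> [/powR_eq0_eq0 | <-].
    by case: x; case: y => /= h; first [reflexivity | exfalso; lra].
  by rewrite /dist4 (_ : dist4q x x = 0) ?powR0 ?invr_eq0 ?gt_eqF //; case: x.
- by case: x; case: y.
- by rewrite !dist4_powR; case: x; case: y; case: z => /=; lra.
Qed.

Definition N : set point := [set x | x <> ptz].
Definition mu : seq (R * point) := [:: (1, ptx); (1, pty)].

Lemma mu_sum (V : lmodType R) (f : point -> V) :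
  \sum_(z <- mu) z.1 *: f z.2 = f ptx + f pty.
Proof. by rewrite !big_cons big_nil /= !scale1r addr0. Qed.

Lemma mu_N z : List.In z mu -> N z.2.
Proof. by case=> [<-|[<-|[]]]. Qed.

Definition embed (x : point) : R^o * R^o :=
  match x with ptx => (1, 0) | pty => (0, 1) | _ => 0 end.

Lemma embed_lipschitz x y : N x -> N y -> qnorm p gap (embed x - embed y) <= dist4 x y.
Proof.
have diff_dist : qnorm p gap ((1, 0) - (0, 1)) <= dist4 ptx pty.
  have -> : (1, 0) - (0, 1) = (1, -1) :> R^o * R^o.
    by apply/pair_equal_spec; rewrite /= subr0 sub0r.
  rewrite /dist4 /= /gapq -powRrM mulrAC divff ?gt_eqF // mul1r.
  exact: qnorm_diff hp gap_gt0.
case: x => [| | | /(_ erefl) []]; case: y => [| | | _ /(_ erefl) []] _ _ /=;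
  rewrite ?subrr ?(qnorm0 hp gap_gt0) ?dist4_ge0 // ?sub0r ?subr0 ?(qnormN hp gap_gt0).
- by rewrite /dist4 /= powR1 (qnorm_unit1 hp gap_gt0).
- by rewrite /dist4 /= powR1 (qnorm_unit2 hp gap_gt0).
- by rewrite /dist4 /= powR1 (qnorm_unit1 hp gap_gt0).
- by rewrite /dist4 /= powR1 (qnorm_unit2 hp gap_gt0).
- by rewrite -opprB (qnormN hp gap_gt0); exact: diff_dist.
Qed.

Lemma freenorm_N_ge : 2 `^ p^-1 <= freenorm p dist4 pt0 N mu.
Proof.
apply: le_trans (freenorm_ge p_gt0 (Y := qnorm_pBanach hp gap_gt0) (f := embed) _ mu_N _ _).
- rewrite mu_sum /=.
  have -> : (1, 0) + (0, 1) = (1, 1) :> R^o * R^o.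
    by apply/pair_equal_spec; rewrite /= addr0 add0r.
  have : 2 <= qnormp p gap (1, 1).
    by apply: qnormp_ge => c; exact: two_le_sum_powR.
  by rewrite qnormE; apply: ler_powRl; rewrite ?invr_ge0 ?(ltW p_gt0).
- by [].
- by [].
- exact: embed_lipschitz.
Qed.

Definition bound := (2 `^ p * dist4 ptz pt0 `^ p + 2 * dist4 ptx ptz `^ p) `^ p^-1.

Lemma freenorm_M_le : freenorm p dist4 pt0 setT mu <= bound.
Proof.
apply: freenorm_le => [|Y f f0 f_lip]; first exact: powR_ge0.
have split_z : f ptx + f pty = 2 *: f ptz + ((f ptx - f ptz) + (f pty - f ptz)).
  by rewrite scaler_nat mulr2n addrACA !subrKC.
rewrite mu_sum split_z; apply: pb_norm_le_root => //.
have z_le : pb_norm (2 *: f ptz) `^ p <= 2 `^ p * dist4 ptz pt0 `^ p.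
  rewrite pb_hom normr_nat powRM ?ler0n ?pb_ge0 // ler_wpM2l ?powR_ge0 //.
  by rewrite ler_powRl ?(ltW p_gt0) ?pb_ge0 //; have := f_lip ptz pt0 I I; rewrite f0 subr0.
have x_le : pb_norm (f ptx - f ptz) `^ p <= dist4 ptx ptz `^ p.
  by rewrite ler_powRl ?(ltW p_gt0) ?pb_ge0 ?f_lip.
have y_le : pb_norm (f pty - f ptz) `^ p <= dist4 ptx ptz `^ p.
  by rewrite ler_powRl ?(ltW p_gt0) ?pb_ge0 ?f_lip.
apply: le_trans (pb_tri _ _) _; rewrite mulr_natl mulr2n; apply: lerD z_le _.
by apply: le_trans (pb_tri _ _) _; exact: lerD.
Qed.

Lemma bound_gt0 : 0 < bound.
Proof.
rewrite /bound powR_gt0 // ltr_wpDl ?mulr_ge0 ?powR_ge0 //.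
by rewrite mulr_gt0 ?ltr0n ?powR_gt0 //= divr_gt0 ?gapq_gt0.
Qed.

Lemma amen_N_ge : ((2 `^ p^-1 / bound)%:E <= amen p dist4 pt0 N)%E.
Proof. exact: amen_ge bound_gt0 mu_N freenorm_N_ge freenorm_M_le. Qed.

Lemma aa_ge_ratio : ((2 `^ p^-1 / bound)%:E <= aa p q 2)%E.
Proof.
apply: le_trans amen_N_ge _; apply: ereal_sup_ubound.
exists point, dist4, pt0, N; split=> //; first exact: dist4_rmetric.
exists (fun i : 'I_2 => if i == ord0 then ptx else pty).
by case=> [_|_|_|/(_ erefl) []]; [left | right; exists ord0 | right; exists ord_max].
Qed.

Lemma ratio_eq :
  ((2 * 2 `^ (p / q)) / (2 `^ p * (2 - (2 - 2 `^ p) `^ (q / p)) `^ (p / q)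
     + 2 * (2 - 2 `^ p))) `^ (1 / p) = 2 `^ p^-1 / bound.
Proof.
have := gapq_gt0; have := gapq_le1; have := gap_gt0 => gap0 gapq1 gapq0.
have gapq2 : 0 <= 1 - gapq / 2 by lra.
rewrite -/gap -/gapq div1r /bound; set r := p / q.
have dz : dist4 ptz pt0 `^ p = (1 - gapq / 2) `^ r.
  by rewrite /dist4 /= -powRrM [q^-1 * p]mulrC.
have dx : dist4 ptx ptz `^ p = gap / 2 `^ r.
  rewrite /dist4 /= -powRrM [q^-1 * p]mulrC -/r powR_div ?ler0n //; last lra.
  rewrite /gapq -powRrM (_ : q / p * r = 1) ?powRr1 //; first lra.
  by rewrite /r; field; rewrite ?gt_eqF.
have d2 : (2 - gapq) `^ r = 2 `^ r * (1 - gapq / 2) `^ r.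
  have -> : 2 - gapq = 2 * (1 - gapq / 2) by field.
  by rewrite powRM ?ler0n.
rewrite dz dx d2; set x := 2 `^ r; set T := (1 - gapq / 2) `^ r.
have x0 : 0 < x by rewrite powR_gt0.
have T0 : 0 <= T by rewrite powR_ge0.
have D0 : 0 < 2 `^ p * T + 2 * (gap / x).
  by rewrite ltr_wpDl ?mulr_ge0 ?powR_ge0 // mulr_gt0 ?divr_gt0.
have -> : 2 * x / (2 `^ p * (x * T) + 2 * gap) = 2 / (2 `^ p * T + 2 * (gap / x)).
  field; apply/andP; split; rewrite gt_eqF //.
  by rewrite ltr_wpDl ?mulr_ge0 ?powR_ge0 ?(ltW x0) // mulr_gt0 ?ltr0n.
by rewrite powR_div ?ler0n ?ltW.
Qed.

Lemma aa_ge_formula :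
  ((((2 * 2 `^ (p / q)) / (2 `^ p * (2 - (2 - 2 `^ p) `^ (q / p)) `^ (p / q)
     + 2 * (2 - 2 `^ p))) `^ (1 / p))%:E <= aa p q 2)%E.
Proof. by rewrite ratio_eq; exact: aa_ge_ratio. Qed.

End FourPointSpace.

Lemma aa_pp_ge (R : realType) (p : R) : 0 < p < 1 ->
  ((4 / (4 + 2 `^ p * (2 `^ p - 2)))%:E <= aa p p 2)%E.
Proof.
move=> /andP[p_gt0 p_lt1]; apply: le_trans (aa_ge_formula p_gt0 p_lt1 p_gt0).
have := two_powR_ge1 (ltW p_gt0); have := two_powR_lt2 p_lt1.
set a := 2 `^ p => a2 a1.
have a_ge0 : 0 <= 2 - a by lra.
have a_le2 : 0 <= 2 - (2 - a) by lra.
rewrite lee_fin mulfV ?gt_eqF // !powRr1 ?ler0n //.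
have -> : a * (2 - (2 - a)) + 2 * (2 - a) = 4 + a * (a - 2) by ring.
rewrite -natrM; apply: ge1_ler_powRV; last by rewrite p_gt0 ltW.
by rewrite ler_pdivlMr ?mul1r; nra.
Qed.

Lemma aa_p1_gt1 (R : realType) (p : R) : 0 < p < 1 ->
  1 < 2 `^ (p + 1) / (4 + 2 `^ p * ((2 - (2 - 2 `^ p) `^ (1 / p)) `^ p - 2)) ->
  (1%:E < aa p 1 2)%E.
Proof.
move=> /andP[p_gt0 p_lt1]; rewrite powRD ?pnatr_eq0 ?implybT // powRr1 ?ler0n //.
set X := (2 - _) `^ p.
have -> : 4 + 2 `^ p * (X - 2) = 2 `^ p * X + 2 * (2 - 2 `^ p) by ring.
move=> cond; apply: lt_le_trans _ (aa_ge_formula p_gt0 p_lt1 ltr01).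
rewrite lte_fin !divr1 -/X [2 * 2 `^ p]mulrC.
by apply: lt_le_trans cond (ge1_ler_powRV (ltW cond) _); rewrite p_gt0 ltW.
Qed.

Section TwoThirds.
Context {R : realType}.

Lemma powR_frac (x : R) (m n : nat) : 0 <= x -> x `^ (m%:R / n%:R) = (x `^ n%:R^-1) ^+ m.
Proof. by move=> x0; rewrite mulrC powRrM powR_mulrn ?powR_ge0. Qed.

Lemma powR_invnK (x : R) (n : nat) : 0 <= x -> (0 < n)%N -> (x `^ n%:R^-1) ^+ n = x.
Proof. by move=> x0 n0; rewrite -powR_frac // divff ?pnatr_eq0 -?lt0n // powRr1. Qed.

Lemma two_thirds_ineq (a b c : R) : 0 <= a -> a ^+ 3 = 2 ->
  0 <= b -> b ^+ 2 = 2 - a ^+ 2 -> 0 <= c -> c ^+ 3 = 2 - b ^+ 3 ->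
  1 < a ^+ 2 * 2 / (4 + a ^+ 2 * (c ^+ 2 - 2)).
Proof.
have ler_pow n (x y : R) : (0 < n)%N -> 0 <= x -> 0 <= y -> (x ^+ n <= y ^+ n) = (x <= y).
  by move=> n0 x0 y0; rewrite ler_pXn2r ?nnegrE.
(* With a^3 = 2 the goal reduces to c^2 < 4 - 2a, whose margin is about 0.04:
   two-digit bounds on a, b and c suffice. *)
move=> a0 ha; have a_ge1 : 1 <= a by rewrite -(ler_pow 3) // ha expr1n; lra.
have a_le : a <= 63 / 50 by rewrite -(ler_pow 3) // ha; lra.
have a2_le : a ^+ 2 <= 3969 / 2500 by rewrite expr2; nra.
move=> b0 hb; have b_ge : 31 / 50 <= b by rewrite -(ler_pow 2) // hb; lra.
have b3_ge : (31 / 50) ^+ 3 <= b ^+ 3 by apply: lerXn2r; rewrite ?nnegrE; lra.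
move=> c0 hc; have c_le : c <= 121 / 100 by rewrite -(ler_pow 3) // hc; lra.
have c2_lt : c ^+ 2 < 4 - 2 * a by rewrite expr2; nra.
have ac : a ^+ 2 * c ^+ 2 < 4 * a ^+ 2 - 2 * a ^+ 3.
  by rewrite -[X in _ < X](_ : a ^+ 2 * (4 - 2 * a) = _) ?ltr_pM2l ?exprn_gt0 //; [lra | ring].
have ac0 : 0 <= a ^+ 2 * c ^+ 2 by rewrite mulr_ge0 ?exprn_ge0.
rewrite ha in ac.
have D0 : 0 < 4 + a ^+ 2 * (c ^+ 2 - 2) by rewrite mulrBr; lra.
by rewrite ltr_pdivlMr // mul1r mulrBr; lra.
Qed.

Lemma two_thirds_condition (p : R) : p = 2 / 3 ->
  1 < 2 `^ (p + 1) / (4 + 2 `^ p * ((2 - (2 - 2 `^ p) `^ (1 / p)) `^ p - 2)).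
Proof.
move=> p23; have p_lt1 : p < 1 by rewrite p23; lra.
set a := (2 : R) `^ 3%:R^-1.
have ha : a ^+ 3 = 2 by rewrite powR_invnK ?ler0n.
have ep : 2 `^ p = a ^+ 2 by rewrite p23 powR_frac ?ler0n.
have a2_lt : a ^+ 2 < 2 by rewrite -ep two_powR_lt2.
have a2_ge : 1 <= a ^+ 2 by rewrite -ep two_powR_ge1 // p23; lra.
set b := (2 - a ^+ 2) `^ 2%:R^-1.
have hb : b ^+ 2 = 2 - a ^+ 2 by rewrite powR_invnK // subr_ge0 ltW.
have eb : (2 - 2 `^ p) `^ (1 / p) = b ^+ 3.
  by rewrite ep (_ : 1 / p = 3%:R / 2%:R) ?powR_frac ?subr_ge0 ?ltW // p23; field.
have b3_le : b ^+ 3 <= 1.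
  rewrite exprn_ile1 ?powR_ge0 // -(ler_pXn2r (isT : (0 < 2)%N)) ?nnegrE ?powR_ge0 //.
  by rewrite hb expr1n; lra.
set c := (2 - b ^+ 3) `^ 3%:R^-1.
have hc : c ^+ 3 = 2 - b ^+ 3 by rewrite powR_invnK // subr_ge0; lra.
have ec : (2 - b ^+ 3) `^ p = c ^+ 2 by rewrite p23 powR_frac //; lra.
have e2 : 2 `^ (p + 1) = a ^+ 2 * 2.
  by rewrite powRD ?pnatr_eq0 ?implybT // powRr1 ?ler0n // ep.
rewrite e2 eb ec ep; apply: (two_thirds_ineq _ ha _ hb _ hc); exact: powR_ge0.
Qed.

End TwoThirds.

Theorem proposition3p24 (R : realType) :
  (forall p : R, 0 < p < 1 ->
     (forall q : R, p <= q <= 1 ->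
        ((((2 * 2 `^ (p / q)) /
           (2 `^ p * (2 - (2 - 2 `^ p) `^ (q / p)) `^ (p / q)
            + 2 * (2 - 2 `^ p))) `^ (1 / p))%:E <= aa p q 2)%E)
     /\ ((4 / (4 + 2 `^ p * (2 `^ p - 2)))%:E <= aa p p 2)%E
     /\ (1 < 2 `^ (p + 1) /
              (4 + 2 `^ p * ((2 - (2 - 2 `^ p) `^ (1 / p)) `^ p - 2)) ->
         (1%:E < aa p 1 2)%E))
  /\ (let p : R := 2 / 3 in
      1 < 2 `^ (p + 1) /
            (4 + 2 `^ p * ((2 - (2 - 2 `^ p) `^ (1 / p)) `^ p - 2))
      /\ (1%:E < aa p 1 2)%E).
Proof.
split=> [p hp | p].
  have /andP[p_gt0 p_lt1] := hp.
  split=> [q /andP[pq _] |]; first exact: aa_ge_formula p_gt0 p_lt1 (lt_le_trans p_gt0 pq).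
  by split; [exact: aa_pp_ge | exact: aa_p1_gt1].
have cond := two_thirds_condition (erefl p).
by split=> //; apply: aa_p1_gt1 cond; rewrite /p; apply/andP; split; lra.
Qed.
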